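(* Let $\mathbb{K}$ be an algebraically closed field of characteristic $0$. Let $f\in\mathbb{K}[X,Y]$ have degree $d$ and let $G,H\in\mathbb{K}[X,Y]$ have degree $\le\nu-1$, where $\nu\ge d$. Suppose $P\in\mathbb{K}[X,Y]$ and $s\in\mathbb{N}$ satisfy $$\mathbf{d}\Big(\frac{P}{f^s}\Big)=\frac1f\big(G\,\mathbf{d}X+H\,\mathbf{d}Y\big),$$ i.e. $\partial_X(P/f^s)=G/f$ and $\partial_Y(P/f^s)=H/f$, and that $f$ does not divide $P$ if $s\ge1$. Then either $s=1$ and $\deg P\le\nu$, or $s=0$ and $\deg P\le\nu-d$. *)

From HB Require Import structures.
From mathcomp Require Import all_boot all_algebra.
From mathcomp Require Import mpoly.
Set Implicit Arguments. Unset Strict Implicit. Unset Printing Implicit Defensive.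
Import GRing.Theory.
Local Open Scope ring_scope.

(* Bivariate polynomials K[X,Y] are {mpoly K[2]}; X is variable 0, Y is variable 1. *)
Definition varX : 'I_2 := @Ordinal 2 0 isT.
Definition varY : 'I_2 := @Ordinal 2 1 isT.

(* Total degree: msize p = 1 + deg p (msize 0 = 0).  deg p <= k  <->  msize p <= k+1 *)
Definition deg_le (K : fieldType) (p : {mpoly K[2]}) (k : nat) : Prop :=
  (msize p <= k.+1)%N.

Definition mdvd (K : fieldType) (f P : {mpoly K[2]}) : Prop :=
  exists Q : {mpoly K[2]}, P = Q * f.

(* d_v (P / f^s) = G / f  (v = X or Y), written with the quotient rule
   d_v (P/f^s) = (f * d_v P - s * P * d_v f) / f^(s+1), after multiplying
   both sides by f^(s+1) (f <> 0). *)
Definition dlog_eq (K : fieldType) (v : 'I_2) (P f G : {mpoly K[2]}) (s : nat) : Prop :=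
  f * mderiv v P - (P * mderiv v f) *+ s = G * f ^+ s.

(* With the Euler operator [E = X d/dX + Y d/dY], the two equations combine into
     f E(P) - s P E(f) = (X G + Y H) f^s.
   In characteristic 0, [E] multiplies a form of degree [k] by [k]; hence [E(P)] has the
   degree [e] of [P] when [e > 0], and when [e > deg f] the top-degree part of
   [f E(P) - P E(f)] is [(e - deg f)] times that of [f P].  Comparing degrees settles
   [s = 0] and [s = 1].  For [s >= 2], [f] divides [P]: after a linear change of
   coordinates [Y := Y + lam X] making the [X]-leading coefficient of [f] a nonzero
   constant, restrict to each line [Y = c].  If [x] were a root of [f] of multiplicity
   [m] and of [P] of multiplicity [k < m], the left-hand side would vanish at [x] to
   order exactly [m + k - 1 < s m], the order on the right.  So every specialization of
   [f] divides that of [P], and the remainder of [P] modulo [f] in [X] vanishes. *)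

From HB Require Import structures.
From mathcomp Require Import all_boot all_algebra.
From mathcomp Require Import mpoly.
From mathcomp Require Import ring zify.
Set Implicit Arguments. Unset Strict Implicit. Unset Printing Implicit Defensive.
Import GRing.Theory.
Local Open Scope ring_scope.

Lemma mul_deriv_exp (R : comNzRingType) (p : {poly R}) n :
  p * (p ^+ n)^`() = p^`() * p ^+ n *+ n.
Proof. by case: n => [|n]; rewrite ?mulr0n ?expr0 ?derivC ?mulr0 // deriv_exp exprS; ring. Qed.

Lemma map_frac_deriv (R S : comNzRingType) (f : {rmorphism R -> S}) (g p r : {poly R}) s :
  g * p^`() - (p * g^`()) *+ s = r * g ^+ s ->
  map_poly f g * (map_poly f p)^`() - (map_poly f p * (map_poly f g)^`()) *+ s =
  map_poly f r * map_poly f g ^+ s.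
Proof.
by move=> /(congr1 (map_poly f)); rewrite rmorphB rmorphMn !rmorphM rmorphXn !deriv_map.
Qed.

Section Univariate.
Variable K : closedFieldType.
Implicit Types g p r : {poly K}.

Lemma dvdp_mup g p : g != 0 -> p != 0 ->
  (forall x, (mup x g <= mup x p)%N) -> g %| p.
Proof.
have [n] := ubnP (size g); elim: n g p => // n IH g p lt_g_n gn0 pn0 le_mup.
have [/closed_rootP [x gx0] | /negPn g1] := boolP (size g != 1%N); last first.
  by apply: (@dvdp_trans _ 1); rewrite ?dvd1p ?dvdp1.
have [g1 Eg] := factor_theorem _ _ gx0.
have g1n0 : g1 != 0 by apply: contraNneq gn0 => g10; rewrite Eg g10 mul0r.
have : (1 <= mup x p)%N.
  apply: leq_trans (le_mup x).
  by rewrite Eg mupM ?polyXsubC_eq0 // (@mup_XsubCX _ 1) eqxx leq_addl.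
rewrite mup_geq // expr1 => /dvdpP [p1 Ep].
have p1n0 : p1 != 0 by apply: contraNneq pn0 => p10; rewrite Ep p10 mul0r.
rewrite Eg Ep dvdp_mul2r ?polyXsubC_eq0 //; apply: IH => // [|y].
  by rewrite Eg size_mul ?polyXsubC_eq0 // size_XsubC addn2 in lt_g_n.
by have := le_mup y; rewrite Eg Ep !mupM ?polyXsubC_eq0 // leq_add2r.
Qed.

Hypothesis Kchar0 : [pchar K] =i pred0.

(* Writing [g = g1 u^m] and [p = p1 u^k] with [u = X - x], the lowest-order term of
   [u (g p' - s p g')] at [x] is [(k - s m) g1 p1 u^(m + k)], nonzero in characteristic 0. *)
Lemma XsubC_exp_ndvdp_frac_deriv x s g p : g != 0 -> p != 0 ->
  (mup x p < s * mup x g)%N ->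
  ~~ (('X - x%:P) ^+ (mup x g + mup x p).+1 %| ('X - x%:P) * (g * p^`() - (p * g^`()) *+ s)).
Proof.
move=> gn0 pn0; set u := 'X - x%:P.
have un0 : u != 0 by rewrite polyXsubC_eq0.
have [m [g1 /implyP/(_ gn0) g1x Eg]] := multiplicity_XsubC g x.
have [k [p1 /implyP/(_ pn0) p1x Ep]] := multiplicity_XsubC p x.
have -> : mup x g = m by rewrite Eg mupMr // mup_XsubCX eqxx.
have -> : mup x p = k by rewrite Ep mupMr // mup_XsubCX eqxx.
move=> lt_k_sm.
have mulXsubC_deriv q j : u * (q * u ^+ j)^`() = u ^+ j * (u * q^`() + q *+ j).
  by rewrite derivM mulrDr [u * (q * _)]mulrCA mul_deriv_exp derivXsubC; ring.
pose B := u * (g1 * p1^`() - (p1 * g1^`()) *+ s) + (g1 * p1) *+ k - (g1 * p1) *+ (s * m).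
have -> : u * (g * p^`() - (p * g^`()) *+ s) = u ^+ (m + k) * B.
  have -> : u * (g * p^`() - (p * g^`()) *+ s) =
    g * (u * p^`()) - (p * (u * g^`())) *+ s by ring.
  by rewrite Eg Ep !mulXsubC_deriv exprD /B; ring.
have B_x : ~~ root B x.
  rewrite /root /B -[(s * m)%N](subnK (ltnW lt_k_sm)) mulrnDr !hornerE subrr mul0r add0r.
  rewrite opprD addrCA subrr addr0 oppr_eq0 hornerMn hornerM -mulr_natr !mulf_eq0.
  rewrite (proj1 (pcharf0P K) Kchar0).
  by rewrite subn_eq0 leqNgt lt_k_sm orbF -!/(root _ _) negb_or g1x p1x.
by rewrite exprSr dvdp_mul2l ?expf_neq0 // dvdp_XsubCl.
Qed.

Lemma dvdp_frac_deriv g p r s : g != 0 -> (2 <= s)%N ->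
  g * p^`() - (p * g^`()) *+ s = r * g ^+ s -> g %| p.
Proof.
move=> gn0 s_ge2 E; have [->|pn0] := eqVneq p 0; first exact: dvdp0.
apply: dvdp_mup => // x; rewrite leqNgt; apply/negP => lt_pg.
have lt_p_sg : (mup x p < s * mup x g)%N by nia.
apply: (negP (XsubC_exp_ndvdp_frac_deriv gn0 pn0 lt_p_sg)); rewrite E.
have ug : ('X - x%:P) ^+ mup x g %| g by rewrite -mup_geq.
apply: (@dvdp_trans _ (('X - x%:P) * (('X - x%:P) ^+ mup x g) ^+ s)).
  by rewrite -exprM -exprS dvdp_exp2l //; nia.
exact: dvdp_mul (dvdpp _) (dvdp_mull r (dvdp_exp2r s ug)).
Qed.
End Univariate.

Section MpolySize.
Variables (n : nat) (R : idomainType).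
Implicit Types p q : {mpoly R[n]}.

Lemma msizeDl p q : (msize q < msize p)%N -> msize (p + q) = msize p.
Proof.
move=> lt_qp; apply/eqP; rewrite eqn_leq; apply/andP; split.
  by rewrite (leq_trans (msizeD_le _ _)) // geq_max leqnn ltnW.
have := msizeD_le (p + q) (- q); rewrite addrK msizeN leq_max.
by case/orP => // le_pq; rewrite leqNgt lt_qp in le_pq.
Qed.

Lemma msizeM_leq p q : (msize (p * q) <= (msize p + msize q).-1)%N.
Proof.
have [->|pn0] := eqVneq p 0; first by rewrite mul0r msize0.
have [->|qn0] := eqVneq q 0; first by rewrite mulr0 msize0.
by rewrite msizeM.
Qed.

Lemma msize_mulX i p : (msize ('X_i * p) <= (msize p).+1)%N.
Proof. by rewrite (leq_trans (msizeM_leq _ _)) // msizeX mdeg1. Qed.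

End MpolySize.

Section Euler.
Variables (n : nat) (K : fieldType).
Implicit Types p q : {mpoly K[n]}.

Definition euler p : {mpoly K[n]} := \sum_i 'X_i * p^`M(i).

Lemma eulerD p q : euler (p + q) = euler p + euler q.
Proof. by rewrite /euler -big_split; apply: eq_bigr => i _; rewrite mderivD mulrDr. Qed.

Lemma eulerZ c p : euler (c *: p) = c *: euler p.
Proof. by rewrite /euler scaler_sumr; apply: eq_bigr => i _; rewrite mderivZ scalerAr. Qed.

Lemma eulerX m : euler 'X_[m] = (mdeg m)%:R *: 'X_[m].
Proof.
rewrite /euler mdegE natr_sum scaler_suml; apply: eq_bigr => i _.
rewrite mderivX -scalerAr; have [->|mi] := eqVneq (m i) 0%N; first by rewrite !scale0r.
by rewrite -mpolyXD addmC submK // lep1mP.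
Qed.

Lemma eulerE p : euler p = \sum_(m <- msupp p) ((mdeg m)%:R * p@_m) *: 'X_[m].
Proof.
rewrite {1}(mpolyE p); elim: (msupp p) => [|m r IH]; last first.
  by rewrite !big_cons eulerD IH eulerZ eulerX scalerA mulrC.
by rewrite !big_nil /euler big1 // => i _; rewrite mderiv0 mulr0.
Qed.

(* [euler] acts on the homogeneous part of degree [k] as multiplication by [k]. *)
Lemma msize_scale_sub_euler k p : (msize p <= k.+1)%N ->
  (msize (k%:R *: p - euler p) <= k)%N.
Proof.
move=> le_pk; rewrite eulerE {1}(mpolyE p) scaler_sumr -sumrB.
apply: (leq_trans (msize_sum _ _ _)); apply/bigmax_leqP_seq => m m_p _.
rewrite scalerA -scalerBl -mulrBl.
have [->|ne] := eqVneq (mdeg m) k; first by rewrite subrr mul0r scale0r msize0.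
apply: (leq_trans (msizeZ_le _ _)); rewrite msizeX ltn_neqAle ne -ltnS.
exact: leq_trans (msize_mdeg_lt m_p) le_pk.
Qed.

Hypothesis Kchar0 : [pchar K] =i pred0.

Lemma msize_euler p : (1 < msize p)%N -> msize (euler p) = msize p.
Proof.
case E: (msize p) => [|[|k]] // _.
have -> : euler p = k.+1%:R *: p - (k.+1%:R *: p - euler p) by rewrite opprB addrC subrK.
rewrite msizeDl msizeZ ?(proj1 (pcharf0P K) Kchar0) // msizeN E ltnS.
by rewrite msize_scale_sub_euler // E.
Qed.

(* Up to terms of lower degree, [f * euler P - P * euler f] equals [(e - d) * f * P]. *)
Lemma msize_euler_wronskian f P d e : msize f = d.+1 -> msize P = e.+1 -> (d < e)%N ->
  msize (f * euler P - P * euler f) = (d + e).+1.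
Proof.
move=> sz_f sz_P lt_de.
have fn0 : f != 0 by rewrite -msize_poly_eq0 sz_f.
have Pn0 : P != 0 by rewrite -msize_poly_eq0 sz_P.
have le_Rf := msize_scale_sub_euler (eq_leq sz_f).
have le_RP := msize_scale_sub_euler (eq_leq sz_P).
set RP := e%:R *: P - euler P in le_RP *; set Rf := d%:R *: f - euler f in le_Rf *.
have -> : f * euler P - P * euler f = (e - d)%:R *: (f * P) + (P * Rf - f * RP).
  rewrite /RP /Rf natrB 1?ltnW // -!mul_mpolyC rmorphB /=; ring.
have top : msize ((e - d)%:R *: (f * P)) = (d + e).+1.
  by rewrite msizeZ ?msizeM ?sz_f ?sz_P ?addnS // (proj1 (pcharf0P K) Kchar0) subn_eq0 -ltnNge.
rewrite msizeDl top // (leq_ltn_trans (msizeD_le _ _)) // msizeN gtn_max.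
apply/andP; split; apply: leq_ltn_trans (msizeM_leq _ _) _.
  by rewrite sz_P addSn ltnS addnC leq_add2r.
by rewrite sz_f addSn ltnS leq_add2l.
Qed.

End Euler.

Lemma big_ord2 (R : Type) (idx : R) (op : Monoid.law idx) (F : 'I_2 -> R) :
  \big[op/idx]_(i < 2) F i = op (F varX) (F varY).
Proof. by rewrite big_ord_recl big_ord1; congr (op (F _) (F _)); exact/val_inj. Qed.

Lemma mdeg2 (m : 'X_{1..2}) : mdeg m = (m varX + m varY)%N.
Proof. by rewrite mdegE big_ord2. Qed.

(* The degree-[k] form of [p] at [X = 1]; its value at [lam] is the [x^k]-coefficient of
   [twist lam p] below. *)
Definition top_form (K : fieldType) (p : {mpoly K[2]}) k : {poly K} :=
  \sum_(m <- msupp p | mdeg m == k) p@_m *: 'X^(m varY).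

Lemma top_form_neq0 (K : fieldType) (p : {mpoly K[2]}) k :
  msize p = k.+1 -> top_form p k != 0.
Proof.
move=> sz_p; have pn0 : p != 0 by rewrite -msize_poly_eq0 sz_p.
set m0 := mlead p; have m0_p : m0 \in msupp p := mlead_supp pn0.
have deg_m0 : mdeg m0 = k by apply/succn_inj; rewrite mlead_deg.
apply/eqP => /(congr1 (fun q : {poly K} => q`_(m0 varY))).
rewrite coef0 /top_form coef_sum big_mkcond (bigD1_seq m0) ?msupp_uniq //=.
rewrite deg_m0 eqxx coefZ coefXn eqxx mulr1 big1 ?addr0 => [/eqP|m ne_m0].
  by rewrite mcoeff_eq0 m0_p.
case: eqP => // deg_m; rewrite coefZ coefXn; case: eqP => [eq_mY|]; last by rewrite mulr0.
case/eqP: ne_m0; apply/mnmP => i; have [->|->] : i = varX \/ i = varY.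
- by case: i => [[|[|]]] // ? ; [left|right]; exact/val_inj.
- by apply/(@addIn (m varY)); rewrite -mdeg2 deg_m -deg_m0 mdeg2 eq_mY.
- by [].
Qed.

Section Twist.
Variables (K : fieldType) (lam : K).
Implicit Types p q : {mpoly K[2]}.

Definition twistY : {poly {poly K}} := 'X%:P + lam%:P%:P * 'X.

Definition twist_var (i : 'I_2) : {poly {poly K}} := if i == varX then 'X else twistY.

(* [twist p] is [p(x, y + lam x)], seen as a polynomial in [x] over [K[y]]. *)
Definition twist : {rmorphism {mpoly K[2]} -> {poly {poly K}}} :=
  mmap ((@polyC {poly K}) \o (@polyC K)) twist_var.

Definition untwist : {rmorphism {poly {poly K}} -> {mpoly K[2]}} :=
  horner_eval 'X_varX \o
  map_poly (horner_eval ('X_varY - lam *: 'X_varX) \o map_poly (@mpolyC 2 K)).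

Lemma twistZX c m :
  twist (c *: 'X_[m]) = c%:P%:P * ('X ^+ m varX * twistY ^+ m varY).
Proof. by rewrite /twist /= mmapZ mmapX /mmap1 big_ord2. Qed.

Lemma twistE p :
  twist p = \sum_(m <- msupp p) (p@_m)%:P%:P * ('X ^+ m varX * twistY ^+ m varY).
Proof. by apply: eq_bigr => m _; rewrite /mmap1 big_ord2. Qed.

Lemma untwistK : cancel twist untwist.
Proof.
have untwistC (c : K) : untwist c%:P%:P = c%:MP.
  by rewrite /untwist /= map_polyC horner_evalE hornerC /= map_polyC horner_evalE hornerC.
have untwistX : untwist 'X = 'X_varX by rewrite /untwist /= map_polyX horner_evalE hornerX.
have untwistY : untwist twistY = 'X_varY.
  rewrite /twistY rmorphD rmorphM untwistC untwistX.
  rewrite /untwist /= map_polyC horner_evalE hornerC /=.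
  by rewrite map_polyX horner_evalE hornerX -mul_mpolyC; ring.
elim/mpolyind => [|c m p _ _ IH]; first by rewrite !rmorph0.
rewrite !rmorphD IH twistZX !rmorphM !rmorphXn untwistC untwistX untwistY.
by rewrite mul_mpolyC [in RHS]mpolyXE_id big_ord2.
Qed.

Lemma twist_deriv p : (twist p)^`() = twist (p^`M(varX) + lam *: p^`M(varY)).
Proof.
have twistY_deriv : twistY^`() = lam%:P%:P.
  by rewrite /twistY derivD derivM derivX !derivC !(mul0r, add0r, mulr1).
elim/mpolyind: p => [|c m p _ _ IH]; first by rewrite !mderiv0 scaler0 addr0 !raddf0.
rewrite raddfD derivD IH !mderivD scalerDr addrACA [in RHS]raddfD; congr (_ + _).
rewrite /= twistZX !mderivZ !mderivX !scalerA raddfD /= !twistZX !mnmBE !mnm1E /= !subn0.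
rewrite derivM derivC mul0r add0r derivM !deriv_exp derivX twistY_deriv.
rewrite !rmorphM /= !rmorph_nat.
by case: (m varX) => [|a]; case: (m varY) => [|b] /=; rewrite ?subn0 ?subn1 /=; ring.
Qed.

Lemma size_twistY_exp b : (size (twistY ^+ b) <= b.+1)%N.
Proof.
have sz_Y : (size twistY <= 2)%N.
  rewrite (leq_trans (size_polyD _ _)) // geq_max (leq_trans (size_polyC_leq1 _)) //=.
  by rewrite mul_polyC (leq_trans (size_scale_leq _ _)) // size_polyX.
elim: b => [|b IH]; first by rewrite expr0 size_poly1.
by rewrite exprSr (leq_trans (size_polyMleq _ _)) //; lia.
Qed.

Lemma coef_twistY_exp b : (twistY ^+ b)`_b = (lam ^+ b)%:P.
Proof.
elim: b => [|b IH]; first by rewrite !expr0 coefC.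
rewrite exprSr /twistY mulrDr coefD mulrA coefMX /= !coefMC IH.
have -> : (twistY ^+ b)`_b.+1 = 0 by apply/(leq_sizeP _ _ (size_twistY_exp b)).
by rewrite mul0r add0r -polyCM exprSr.
Qed.

Lemma size_twist_monomial a b : (size ('X^a * twistY ^+ b)%R <= (a + b).+1)%N.
Proof.
by rewrite (leq_trans (size_polyMleq _ _)) // size_polyXn -addnS leq_add2l size_twistY_exp.
Qed.

Lemma coef_twist_monomial a b : ('X^a * twistY ^+ b)`_(a + b) = (lam ^+ b)%:P.
Proof. by rewrite coefXnM ltnNge leq_addr /= addKn coef_twistY_exp. Qed.

Lemma size_twist p k : (msize p <= k.+1)%N -> (size (twist p) <= k.+1)%N.
Proof.
move=> sz_p; rewrite twistE (leq_trans (size_sum _ _ _)) //.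
apply/bigmax_leqP_seq => m m_p _; rewrite (leq_trans (size_polyMleq _ _)) //.
have := size_twist_monomial (m varX) (m varY); have := msize_mdeg_lt m_p.
by rewrite size_polyC mdeg2; case: (_ != 0) => /=; lia.
Qed.

Lemma coef_twist p k : (msize p <= k.+1)%N -> (twist p)`_k = ((top_form p k).[lam])%:P.
Proof.
move=> sz_p; rewrite twistE coef_sum /top_form horner_sum rmorph_sum [RHS]big_mkcond /=.
rewrite !big_seq; apply: eq_bigr => m m_p; rewrite coefCM.
have [deg_m|ne_k] := eqVneq (mdeg m) k.
  by rewrite -deg_m mdeg2 coef_twist_monomial hornerZ hornerXn -polyCM.
rewrite nth_default ?mulr0 // (leq_trans (size_twist_monomial _ _)) // -mdeg2.
by rewrite ltn_neqAle ne_k -ltnS (leq_trans (msize_mdeg_lt m_p)).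
Qed.

Lemma lead_coef_twist p k : msize p = k.+1 -> (top_form p k).[lam] != 0 ->
  lead_coef (twist p) = ((top_form p k).[lam])%:P.
Proof.
move=> sz_p nz_top; have sz_tw := size_twist (eq_leq sz_p).
have coef_k := coef_twist (eq_leq sz_p).
rewrite lead_coefE; suff -> : size (twist p) = k.+1 by rewrite coef_k.
apply/eqP; rewrite eqn_leq sz_tw ltnNge; apply: contra nz_top => /leq_sizeP/(_ k (leqnn k)).
by rewrite coef_k => /polyC_inj ->.
Qed.

End Twist.

Lemma dvdp_specialize (K : closedFieldType) (F P : {poly {poly K}}) :
  lead_coef F \is a GRing.unit ->
  (forall c, map_poly (horner_eval c) F %| map_poly (horner_eval c) P) -> F %| P.
Proof.
move=> uF dvd_c; have Fn0 : F != 0 by apply: contraTneq uF => ->; rewrite lead_coef0 unitr0.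
have /size_poly1P [a a_neq0 lcF] : size (lead_coef F) == 1%N.
  by move: uF; rewrite poly_unitE => /andP [].
set R := P %% F; have E : P = P %/ F * F + R := Pdiv.IdomainUnit.divp_eq uF P.
apply/eqP/polyP => i; rewrite coef0; apply/eqP/negP => /negP/closed_nonrootP [c Ric].
have sz_Fc : size (map_poly (horner_eval c) F) = size F.
  by rewrite size_map_poly_id0 // lcF horner_evalE hornerC.
have dvd_Rc : map_poly (horner_eval c) F %| map_poly (horner_eval c) R.
  have -> : R = P - P %/ F * F by rewrite {1}E addrC addKr.
  by rewrite rmorphB rmorphM dvdp_sub ?dvd_c ?dvdp_mull.
suff : map_poly (horner_eval c) R = 0.
  by move=> /(congr1 (coefp i)); rewrite /= coef_map coef0 /= horner_evalE; apply/eqP.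
apply/eqP; apply: contraTT (ltn_modpN0 P Fn0) => /dvdp_leq/(_ dvd_Rc).
by rewrite -leqNgt sz_Fc => /leq_trans; apply; exact: size_poly.
Qed.

Section DlogEquations.
Variable K : fieldType.
Implicit Types f P G H a b : {mpoly K[2]}.

Lemma dlog_eq_comb f P G H s a b :
  dlog_eq varX P f G s -> dlog_eq varY P f H s ->
  f * (a * P^`M(varX) + b * P^`M(varY)) - (P * (a * f^`M(varX) + b * f^`M(varY))) *+ s =
  (a * G + b * H) * f ^+ s.
Proof.
rewrite /dlog_eq => hX hY; transitivity
  (a * (f * P^`M(varX) - (P * f^`M(varX)) *+ s) +
   b * (f * P^`M(varY) - (P * f^`M(varY)) *+ s)); first by ring.
by rewrite hX hY; ring.
Qed.

Lemma euler2E P : euler P = 'X_varX * P^`M(varX) + 'X_varY * P^`M(varY).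
Proof. by rewrite /euler big_ord2. Qed.

Lemma dlog_eq_euler f P G H s :
  dlog_eq varX P f G s -> dlog_eq varY P f H s ->
  f * euler P - (P * euler f) *+ s = ('X_varX * G + 'X_varY * H) * f ^+ s.
Proof. by rewrite !euler2E; exact: dlog_eq_comb. Qed.

Lemma msize_mulXD i j G H k : (msize G <= k)%N -> (msize H <= k)%N ->
  (msize ('X_i * G + 'X_j * H) <= k.+1)%N.
Proof.
move=> sz_G sz_H; rewrite (leq_trans (msizeD_le _ _)) // geq_max.
by rewrite !(leq_trans (msize_mulX _ _)).
Qed.

Hypothesis Kchar0 : [pchar K] =i pred0.

Lemma deg_le_dlog_eq0 f P G H d nu : msize f = d.+1 ->
  (msize G <= nu)%N -> (msize H <= nu)%N ->
  dlog_eq varX P f G 0 -> dlog_eq varY P f H 0 -> deg_le P (nu - d).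
Proof.
move=> sz_f sz_G sz_H hX hY; rewrite /deg_le.
have := dlog_eq_euler hX hY; rewrite mulr0n subr0 expr0 mulr1 => E.
have := msize_mulXD varX varY sz_G sz_H; rewrite -E.
have [le_P1|lt_1P] := leqP (msize P) 1; first by lia.
have fn0 : f != 0 by rewrite -msize_poly_eq0 sz_f.
have En0 : euler P != 0 by rewrite -msize_poly_eq0 msize_euler // -lt0n ltnW.
by rewrite msizeM // msize_euler // sz_f; lia.
Qed.

Lemma deg_le_dlog_eq1 f P G H d nu : msize f = d.+1 ->
  (msize G <= nu)%N -> (msize H <= nu)%N -> (d <= nu)%N ->
  dlog_eq varX P f G 1 -> dlog_eq varY P f H 1 -> deg_le P nu.
Proof.
move=> sz_f sz_G sz_H le_d_nu hX hY; rewrite /deg_le leqNgt; apply/negP => lt_nu_P.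
have := dlog_eq_euler hX hY; rewrite mulr1n expr1 => E.
have sz_P : msize P = (msize P).-1.+1 by rewrite prednK // (leq_ltn_trans _ lt_nu_P).
set Q := 'X_varX * G + 'X_varY * H in E.
have le_Q : (msize Q <= nu.+1)%N := msize_mulXD varX varY sz_G sz_H.
have le_Qf : (msize (Q * f) <= (msize Q + d.+1).-1)%N by rewrite -sz_f msizeM_leq.
have := msize_euler_wronskian Kchar0 sz_f sz_P; rewrite E; lia.
Qed.

End DlogEquations.

Lemma mdvd_dlog_eq (K : closedFieldType) (Kchar0 : [pchar K] =i pred0)
    (f P G H : {mpoly K[2]}) d s : msize f = d.+1 -> (2 <= s)%N ->
  dlog_eq varX P f G s -> dlog_eq varY P f H s -> mdvd f P.
Proof.
move=> sz_f s_ge2 hX hY.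
have [lam nz_top] := closed_nonrootP _ (top_form_neq0 sz_f).
set F := twist lam f; set a := (top_form f d).[lam].
have lcF : lead_coef F = a%:P := lead_coef_twist sz_f nz_top.
have E : F * (twist lam P)^`() - (twist lam P * F^`()) *+ s =
         twist lam (G + lam *: H) * F ^+ s.
  have := dlog_eq_comb 1 lam%:MP hX hY; rewrite !mul1r !mul_mpolyC.
  move=> /(congr1 (twist lam)).
  by rewrite rmorphB rmorphMn !rmorphM rmorphXn !twist_deriv.
have uF : lead_coef F \is a GRing.unit.
  by rewrite lcF poly_unitE size_polyC coefC /= unitfE nz_top.
have /(Pdiv.IdomainUnit.dvdpP uF) [Q EP] : F %| twist lam P.
  apply: (dvdp_specialize uF) => c.
  apply: (dvdp_frac_deriv Kchar0 _ s_ge2 (map_frac_deriv _ E)).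
  rewrite -size_poly_gt0 size_map_poly_id0; last by rewrite lcF /= horner_evalE hornerC.
  by rewrite size_poly_gt0 -lead_coef_eq0 lcF polyC_eq0.
by exists (untwist lam Q); rewrite -(untwistK lam P) EP rmorphM untwistK.
Qed.

Theorem lemma1p2 (K : closedFieldType) (Kchar0 : [pchar K] =i pred0)
  (f G H P : {mpoly K[2]}) (d nu s : nat)
  (hf : msize f = d.+1)
  (hG : (msize G <= nu)%N) (hH : (msize H <= nu)%N) (* deg <= nu-1 *) (hnu : (d <= nu)%N)
  (hX : dlog_eq varX P f G s) (hY : dlog_eq varY P f H s)
  (hdiv : (1 <= s)%N -> ~ mdvd f P) :
  (s = 1%N /\ deg_le P nu) \/ (s = 0%N /\ deg_le P (nu - d)).
Proof.
case: s hX hY hdiv => [|[|s]] hX hY hdiv.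
- by right; split => //; exact: deg_le_dlog_eq0 hf hG hH hX hY.
- by left; split => //; exact: deg_le_dlog_eq1 hf hG hH hnu hX hY.
- by case: (hdiv isT); exact: mdvd_dlog_eq hf _ hX hY.
Qed.
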